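(* Let $F:\{0,1\}^n\to\mathbb{F}^E_m\cap[0,1]$ be a finite-precision CDF over a binary number format $\mathcal{B}=(n,\gamma_{\mathcal{B}},\phi_{\mathcal{B}})$. The expected number of fair random bits drawn by the procedure $\textsc{Opt}(F)$ described in the context is at most $m+2-2^{-2^{E-1}+3}$.
   Context: $\overline{\mathbb{R}}=\mathbb{R}\cup\{-\infty,+\infty,\bot\}$ is totally ordered by $-\infty<$ reals $<+\infty<\bot$. A binary number format $\mathcal{B}=(n,\gamma_{\mathcal{B}},\phi_{\mathcal{B}})$ consists of $n\ge1$, $\gamma_{\mathcal{B}}:\{0,1\}^n\to\overline{\mathbb{R}}$, and a bijection $\phi_{\mathcal{B}}$ of $\{0,1\}^n$ with $b<_{\mathrm{dict}}b'\Rightarrow\gamma_{\mathcal{B}}(\phi_{\mathcal{B}}(b))\le\gamma_{\mathcal{B}}(\phi_{\mathcal{B}}(b'))$; it induces the order $b<_{\mathcal{B}}b'$ iff $\phi_{\mathcal{B}}^{-1}(b)<_{\mathrm{dict}}\phi_{\mathcal{B}}^{-1}(b')$. $\mathbb{F}^E_m\cap[0,1]$ is the set of reals in $[0,1]$ representable as IEEE-754-style floating-point numbers with $E$ exponent and $m$ mantissa bits. A finite-precision CDF over $\mathcal{B}$ is $F:\{0,1\}^n\to\mathbb{F}^E_m\cap[0,1]$ with $F(\phi_{\mathcal{B}}(1^n))=1$ and $b<_{\mathcal{B}}b'\Rightarrow F(b)\le F(b')$. For $z\in[0,1]$ with concise binary expansion $(z_0.z_1z_2\ldots)_2$ write $[z]_j=z_j$.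 $\textsc{Opt}(F,b,\ell,f_0,f_1)$, called initially as $\textsc{Opt}(F,\varepsilon,0,0,1)$: if $|b|=n$ return $\phi_{\mathcal{B}}(b)$. Let $f_2=F(\phi_{\mathcal{B}}(b\,0\,1^{n-|b|-1}))$. If $f_2=f_1$ return $\textsc{Opt}(F,b0,\ell,f_0,f_2)$; if $f_2=f_0$ return $\textsc{Opt}(F,b1,\ell,f_2,f_1)$. Let $a_0(j)=[f_2-f_0]_j$, $a_1(j)=[f_1-f_2]_j$ (exact real differences). If $\ell>0$: if $a_0(\ell)=1,a_1(\ell)=0$ return $\textsc{Opt}(F,b0,\ell,f_0,f_2)$; if $a_0(\ell)=0,a_1(\ell)=1$ return $\textsc{Opt}(F,b1,\ell,f_2,f_1)$. Then repeat: draw a fair random bit $x$, set $\ell\leftarrow\ell+1$; if $x=0$ and $a_0(\ell)=1$ return $\textsc{Opt}(F,b0,\ell,f_0,f_2)$; if $x=1$ and $a_1(\ell)=1$ return $\textsc{Opt}(F,b1,\ell,f_2,f_1)$. *)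

From Stdlib Require Reals.
From mathcomp Require Import all_boot all_order all_algebra.
Set Implicit Arguments. Unset Strict Implicit. Unset Printing Implicit Defensive.
Import Order.TTheory GRing.Theory Num.Theory.
Local Open Scope ring_scope.

Inductive extR := ENegInf | EReal (r : Reals.Rdefinitions.R) | EPosInf | EBot.

Definition ext_le (x y : extR) : Prop :=
  match x, y with
  | ENegInf, _ => True
  | EReal _, ENegInf => False
  | EReal r, EReal s => Reals.Rdefinitions.Rle r s
  | EReal _, _ => True
  | EPosInf, (EPosInf | EBot) => True
  | EPosInf, _ => False
  | EBot, EBot => True
  | EBot, _ => False
  end.

Fixpoint lex_lt (s t : seq bool) : bool :=
  match s, t with
  | x :: s', y :: t' => (~~ x && y) || ((x == y) && lex_lt s' t')
  | _, _ => false
  end.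

Record BinFormat (n : nat) := {
  bf_n_pos : (0 < n)%N;
  bf_gamma : n.-tuple bool -> extR;
  bf_phi : n.-tuple bool -> n.-tuple bool;
  bf_phi_bij : bijective bf_phi;
  bf_phi_mono : forall b b' : n.-tuple bool,
      lex_lt b b' -> ext_le (bf_gamma (bf_phi b)) (bf_gamma (bf_phi b'))
}.

Definition fmt_lt n (B : BinFormat n) (b b' : n.-tuple bool) : Prop :=
  exists c c' : n.-tuple bool,
    [/\ bf_phi B c = b, bf_phi B c' = b' & lex_lt c c'].

Definition fbias (E : nat) : int := (2 ^ E.-1)%:Z - 1.

(* value of the nonnegative float with biased exponent field e and mantissa M *)
Definition float_val (E m e M : nat) : rat :=
  if e == 0%N then (M%:R / 2 ^+ m) * (2 : rat) ^ (1 - fbias E)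
  else (1 + M%:R / 2 ^+ m) * (2 : rat) ^ (e%:Z - fbias E).

(* finite (non-inf, non-NaN) representable values: exponent field < 2^E - 1 *)
Definition is_float (E m : nat) (x : rat) : Prop :=
  exists e M : nat, [/\ (e < 2 ^ E - 1)%N, (M < 2 ^ m)%N & x = float_val E m e M].

Definition in_F01 (E m : nat) (x : rat) : Prop := is_float E m x /\ 0 <= x <= 1.

Definition is_fp_cdf (E m n : nat) (B : BinFormat n) (F : n.-tuple bool -> rat) : Prop :=
  [/\ forall b, in_F01 E m (F b),
      F (bf_phi B [tuple of nseq n true]) = 1
    & forall b b', fmt_lt B b b' -> F b <= F b'].

(* j-th digit of the concise binary expansion (z_0.z_1 z_2 ...)_2 of z in [0,1] *)
Definition bdigit (z : rat) (j : nat) : bool := odd `|Num.floor (z * 2 ^+ j)|%N.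

(* bit string of length n built from a seq (used only on seqs of size n) *)
Definition mk_tup n (s : seq bool) : n.-tuple bool := insubd (nseq_tuple n false) s.

(* outcome of running Opt on a finite prefix of the random bit stream *)
Inductive opt_res n := OptDone of n.-tuple bool & seq bool | OptNeedMore.
Arguments OptNeedMore {n}.

Definition needs_more n (r : opt_res n) : bool :=
  if r is OptNeedMore then true else false.

(* the "repeat" loop: draw bits until a branch is taken;
   None = the supplied bits ran out before the loop exited *)
Fixpoint opt_loop (d0 d1 : nat -> bool) (l : nat) (s : seq bool)
  : option (bool * nat * seq bool) :=
  match s with
  | [::] => None
  | x :: s' =>
      if ~~ x && d0 l.+1 then Some (false, l.+1, s')
      else if x && d1 l.+1 then Some (true, l.+1, s')
      else opt_loop d0 d1 l.+1 s'
  end.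

Section Opt.
Variables (n : nat) (B : BinFormat n) (F : n.-tuple bool -> rat).

Definition Fmid (b : seq bool) : rat :=
  F (bf_phi B (mk_tup n (b ++ false :: nseq (n - size b - 1) true))).

(* k = n - |b| is the remaining depth; s = remaining random bits *)
Fixpoint opt_run (k : nat) (b : seq bool) (l : nat) (f0 f1 : rat) (s : seq bool)
  : opt_res n :=
  match k with
  | 0%N => OptDone (bf_phi B (mk_tup n b)) s
  | k'.+1 =>
    let f2 := Fmid b in
    if f2 == f1 then opt_run k' (rcons b false) l f0 f2 s
    else if f2 == f0 then opt_run k' (rcons b true) l f2 f1 s
    else
      let d0 := bdigit (f2 - f0) in
      let d1 := bdigit (f1 - f2) in
      if (0 < l)%N && d0 l && ~~ d1 l then opt_run k' (rcons b false) l f0 f2 s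
      else if (0 < l)%N && ~~ d0 l && d1 l then opt_run k' (rcons b true) l f2 f1 s
      else match opt_loop d0 d1 l s with
           | None => OptNeedMore
           | Some (false, l', s') => opt_run k' (rcons b false) l' f0 f2 s'
           | Some (true, l', s') => opt_run k' (rcons b true) l' f2 f1 s'
           end
  end.

Definition Opt (s : seq bool) : opt_res n := opt_run n [::] 0 0 1 s.

(* P(T > k), T = number of fair bits drawn:  fraction of k-bit strings
   on which Opt requests a (k+1)-th bit *)
Definition tail_prob (k : nat) : rat :=
  #|[set s : k.-tuple bool | needs_more (Opt s)]|%:R / 2 ^+ k.

(* E[T] = sum_k P(T > k) (valid also when T = oo with positive prob.);
   E[T] <= c  iff every partial sum is <= c *)
Definition expected_bits_le (c : rat) : Prop :=
  forall N : nat, \sum_(k < N) tail_prob k <= c.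
End Opt.

From mathcomp Require Import all_boot all_order all_algebra zify ring lra.
Set Implicit Arguments. Unset Strict Implicit. Unset Printing Implicit Defensive.
Import Order.TTheory GRing.Theory Num.Theory.

(* Fix a horizon T and call a bit string of length T pending if Opt has not
   halted after reading it. At a node of the recursion with CDF interval
   [f0, f1], weight the pending strings of the states entered after l bits by
   the l-th binary digit of f1 - f0. This weighted count plus the fractional part
   of 2^T (f1 - f0) is subadditive along the split f0 <= f2 <= f1: the carries
   of the binary addition (f2 - f0) + (f1 - f2) = f1 - f0 pay for the strings
   still inside the drawing loop. By induction over the tree, the number
   of pending strings is at most H 1 - H 0 for every H with
   frac (2^T (y - x)) <= H y - H x on representable x <= y. Taking H = 0 once
   2^T turns every float into an integer shows P(more than T bits) = 0 for
   T >= m + 2^(E-1) - 2; taking H z = min (2^T z, 2^m) gives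
   P(more than T bits) <= 2^(m - T). Summing min (1, 2^(m - T)) over
   T < m + 2^(E-1) - 2 yields m + 2 - 2^(3 - 2^(E-1)). *)

Definition count_strings (P : pred (seq bool)) (t : nat) : nat :=
  \sum_(s : t.-tuple bool) P s.

Lemma count_strings0 P : count_strings P 0 = P [::].
Proof.
rewrite /count_strings (eq_bigr (fun=> nat_of_bool (P [::]))) => [|s _].
  by rewrite sum_nat_const card_tuple expn0 mul1n.
by rewrite tuple0.
Qed.

Lemma count_stringsS P t :
  count_strings P t.+1 =
  count_strings (fun s => P (false :: s)) t + count_strings (fun s => P (true :: s)) t.
Proof.
rewrite /count_strings (reindex (fun p : bool * t.-tuple bool => [tuple of p.1 :: p.2])) /=.
  rewrite -(pair_bigA _ (fun x (s : t.-tuple bool) => nat_of_bool (P (x :: s)))).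
  by rewrite big_bool addnC.
exists (fun u : t.+1.-tuple bool => (thead u, behead_tuple u)) => [[x s] _ | u _].
  by congr pair; apply: val_inj.
by apply: val_inj; case: u => [[|x s] ?].
Qed.

Lemma eq_count_strings P Q t :
  (forall s, size s = t -> P s = Q s) -> count_strings P t = count_strings Q t.
Proof. by move=> PQ; apply: eq_bigr => s _; rewrite PQ ?size_tuple. Qed.

Lemma count_strings_pred0 t : count_strings pred0 t = 0.
Proof. exact: big1. Qed.

Lemma count_strings_le P t : count_strings P t <= 2 ^ t.
Proof.
elim: t P => [|t IH] P; first by rewrite count_strings0 leq_b1.
by rewrite count_stringsS expnS mul2n -addnn leq_add.
Qed.

Lemma card_count_strings t (P : pred (seq bool)) :
  #|[set s : t.-tuple bool | P s]| = count_strings P t.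
Proof.
rewrite cardE -sum1_size big_filter big_mkcond /=.
by apply: eq_bigr => s; rewrite inE; case: (P s).
Qed.

Local Open Scope ring_scope.

Definition frac (x : rat) : rat := x - (Num.floor x)%:~R.

Lemma frac_ge0 x : 0 <= frac x.
Proof. by rewrite subr_ge0 floor_le. Qed.

Lemma frac_le x : 0 <= x -> frac x <= x.
Proof. by move=> x0; rewrite lerBlDr lerDl ler0z floor_ge0. Qed.

Lemma frac_int x : x \is a Num.int -> frac x = 0.
Proof. by move=> xZ; rewrite /frac floorK ?subrr. Qed.

Lemma fracDz x y : y \is a Num.int -> frac (x + y) = frac x.
Proof. by move=> yZ; rewrite /frac floorDrz // rmorphD /= (floorK yZ); ring. Qed.

Definition dfloor (j : nat) (x : rat) : int := Num.floor (x * 2 ^+ j).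

Lemma dfloor_ge0 j x : 0 <= x -> 0 <= dfloor j x.
Proof. by move=> x0; rewrite floor_ge0 mulr_ge0 // exprn_ge0. Qed.

Lemma dfloor_double j x :
  2 * dfloor j x <= dfloor j.+1 x < 2 * dfloor j x + 2.
Proof.
rewrite /dfloor floor_ge_int floor_lt_int exprS mulrCA.
have := floor_le (x * 2 ^+ j); have := floorD1_gt (x * 2 ^+ j).
rewrite !intrD !intrM /=; lra.
Qed.

Lemma dfloorS j x : 0 <= x -> dfloor j.+1 x = 2 * dfloor j x + (bdigit x j.+1)%:Z.
Proof.
move=> x0; rewrite /bdigit -/(dfloor j.+1 x).
have /andP[lo hi] := dfloor_double j x.
have [k pk] : exists k : nat, dfloor j x = k%:Z.
  by exists (absz (dfloor j x)); have := dfloor_ge0 j x0; lia.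
have [d d2 ->] : exists2 d : nat, (d < 2)%N & dfloor j.+1 x = (k.*2 + d)%N%:Z.
  by exists (absz (dfloor j.+1 x - 2 * dfloor j x)%R); lia.
by rewrite pk absz_nat oddD odd_double; case: d d2 => [|[|]] //=; lia.
Qed.

Definition carry (a c : rat) (j : nat) : bool :=
  dfloor j (a + c) != dfloor j a + dfloor j c.

Lemma dfloorD a c j :
  dfloor j a + dfloor j c <= dfloor j (a + c) <= dfloor j a + dfloor j c + 1.
Proof.
rewrite -ltzD1 /dfloor floor_ge_int floor_lt_int mulrDl.
have := floor_le (a * 2 ^+ j); have := floorD1_gt (a * 2 ^+ j).
have := floor_le (c * 2 ^+ j); have := floorD1_gt (c * 2 ^+ j).
rewrite !intrD /=; lra.
Qed.

Lemma carryE a c j : (carry a c j)%:Z = dfloor j (a + c) - dfloor j a - dfloor j c.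
Proof. by have := dfloorD a c j; rewrite /carry; case: eqP => /=; lia. Qed.

Lemma carryS a c j : 0 <= a -> 0 <= c ->
  (carry a c j.+1 + bdigit a j.+1 + bdigit c j.+1 = 2 * carry a c j + bdigit (a + c) j.+1)%N.
Proof.
move=> a0 c0; have ac0 : 0 <= a + c by rewrite addr_ge0.
have := carryE a c j; have := carryE a c j.+1.
rewrite (dfloorS j a0) (dfloorS j c0) (dfloorS j ac0).
move: (dfloor j a) (dfloor j c) (dfloor j (a + c)); lia.
Qed.

Lemma carry_frac a c j :
  (carry a c j)%:R = frac (a * 2 ^+ j) + frac (c * 2 ^+ j) - frac ((a + c) * 2 ^+ j).
Proof.
rewrite /frac -!/(dfloor j _) -[_%:R]/((carry a c j)%:Z%:~R) carryE !intrD !intrN.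
by rewrite mulrDl; ring.
Qed.

Lemma carry0 a c : 0 < a -> 0 < c -> a + c <= 1 -> carry a c 0 = bdigit (a + c) 0.
Proof.
move=> a0 c0 ac1; rewrite /carry /bdigit /dfloor !expr0 !mulr1.
have floor0 (x : rat) : 0 <= x < 1 -> Num.floor x = 0.
  by move=> /andP[x0 x1]; apply: floor_def; rewrite x0 add0r.
rewrite (floor0 a) ?(floor0 c) ?addr0; try by apply/andP; split; lra.
have [ac_lt1 | ac_ge1] := ltP (a + c) 1.
  by rewrite floor0 // ac_lt1 addr_ge0 // ltW.
by have -> : a + c = 1 by lra.
Qed.

(* An abstract node of Opt: [a], [c], [w] are the digits of [f2 - f0],
   [f1 - f2] and [f1 - f0], [cr] the carries of their addition, [pend j],
   [pendL j], [pendR j] count the pending strings of the states entered at level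
   [j] at the node and in its two children, and [pendLoop j] those of the
   drawing loop run from level [j]. *)
Section LoopWeight.
Variables (T : nat) (a c w cr : nat -> bool) (pend pendL pendR pendLoop : nat -> nat).
Hypothesis crS : forall j, (cr j.+1 + a j.+1 + c j.+1 = 2 * cr j + w j.+1)%N.
Hypothesis pendLoopS : forall l, (l < T)%N -> pendLoop l =
  ((if a l.+1 then pendL l.+1 else pendLoop l.+1) +
   (if c l.+1 then pendR l.+1 else pendLoop l.+1))%N.
Hypothesis pendLoop_T : pendLoop T = 1%N.
Hypothesis pendE : forall j, (0 < j <= T)%N -> pend j =
  if a j && ~~ c j then pendL j else if ~~ a j && c j then pendR j else pendLoop j.

Lemma loop_weight_step l : (l < T)%N ->
  (cr l * pendLoop l + w l.+1 * pend l.+1 <=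
   a l.+1 * pendL l.+1 + c l.+1 * pendR l.+1 + cr l.+1 * pendLoop l.+1)%N.
Proof.
move=> lT; rewrite pendLoopS // pendE ?lT //; have := crS l.
by case: (cr l) (cr l.+1) (a l.+1) (c l.+1) (w l.+1) => [] [] [] [] [] /=; lia.
Qed.

Lemma loop_weight_le l : (l <= T)%N ->
  (cr l * pendLoop l + \sum_(l.+1 <= j < T.+1) w j * pend j <=
   \sum_(l.+1 <= j < T.+1) (a j * pendL j + c j * pendR j) + cr T)%N.
Proof.
move=> lT; move: {2}(T - l)%N (erefl (T - l)%N) => d.
elim: d l lT => [|d IH] l lT dE.
  have -> : l = T by lia.
  by rewrite !big_geq // pendLoop_T muln1 addn0.
have lT' : (l < T)%N by lia.
have lT1 : (l.+1 < T.+1)%N by [].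
rewrite (big_ltn lT1) (big_ltn lT1).
have := IH l.+1 lT' ltac:(lia); have := loop_weight_step lT'; lia.
Qed.
End LoopWeight.

Definition loop_pred (d0 d1 : nat -> bool) (h : bool -> nat -> seq bool -> bool)
    (l : nat) (s : seq bool) : bool :=
  if opt_loop d0 d1 l s is Some (x, l', s') then h x l' s' else true.

Lemma count_loop_predS d0 d1 h l t :
  count_strings (loop_pred d0 d1 h l) t.+1 =
  ((if d0 l.+1 then count_strings (h false l.+1) t
    else count_strings (loop_pred d0 d1 h l.+1) t) +
   (if d1 l.+1 then count_strings (h true l.+1) t
    else count_strings (loop_pred d0 d1 h l.+1) t))%N.
Proof.
rewrite count_stringsS; congr addn; [case d0l: (d0 l.+1) | case d1l: (d1 l.+1)];
  by apply: eq_count_strings => s _; rewrite /loop_pred /= ?d0l ?d1l.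
Qed.

Lemma lex_lt_cat p s t : lex_lt (p ++ s) (p ++ t) = lex_lt s t.
Proof. by elim: p => //= x p ->; case: x. Qed.

Lemma lex_lt_nseq_true s : false \in s -> lex_lt s (nseq (size s) true).
Proof. by elim: s => //= -[] s IH; rewrite in_cons. Qed.

Lemma val_mk_tup n s : size s = n -> val (mk_tup n s) = s.
Proof. by move=> sn; rewrite /mk_tup val_insubd sn eqxx. Qed.

Section FmidMonotone.
Variables (n : nat) (B : BinFormat n) (F : n.-tuple bool -> rat).
Hypothesis F_mono : forall c c' : n.-tuple bool,
  lex_lt c c' -> F (bf_phi B c) <= F (bf_phi B c').

Let F_mono_seq x y : size x = n -> size y = n -> lex_lt x y ->
  F (bf_phi B (mk_tup n x)) <= F (bf_phi B (mk_tup n y)).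
Proof. by move=> xn yn xy; apply: F_mono; rewrite !val_mk_tup. Qed.

Lemma Fmid_catF b d : ((size b + size d).+1 < n)%N ->
  Fmid B F (b ++ false :: d) <= Fmid B F b.
Proof.
move=> bdn; apply: F_mono_seq; rewrite ?size_cat /= ?size_cat ?size_nseq /=; try lia.
rewrite -catA lex_lt_cat /=.
set t := (X in lex_lt X _); have -> : (n - size b - 1 = size t)%N.
  by rewrite /t ?size_cat /= ?size_cat ?size_nseq /=; lia.
by apply: lex_lt_nseq_true; rewrite mem_cat in_cons eqxx orbT.
Qed.

Lemma Fmid_catT b d : ((size b + size d).+1 < n)%N ->
  Fmid B F b <= Fmid B F (b ++ true :: d).
Proof.
move=> bdn; apply: F_mono_seq; rewrite ?size_cat /= ?size_cat ?size_nseq /=; try lia.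
by rewrite -catA lex_lt_cat.
Qed.
End FmidMonotone.

Section Pending.
Variables (n : nat) (B : BinFormat n) (F : n.-tuple bool -> rat) (T : nat).

Definition pending (k : nat) (b : seq bool) (l : nat) (f0 f1 : rat) : nat :=
  count_strings (fun s => needs_more (opt_run B F k b l f0 f1 s)) (T - l).

Definition pending_weight (k : nat) (b : seq bool) (f0 f1 : rat) : nat :=
  \sum_(0 <= l < T.+1) bdigit (f1 - f0) l * pending k b l f0 f1.

Lemma pending_weightE k b f0 f1 :
  pending_weight k b f0 f1 = (bdigit (f1 - f0) 0 * pending k b 0 f0 f1 +
    \sum_(1 <= l < T.+1) bdigit (f1 - f0) l * pending k b l f0 f1)%N.
Proof. exact: big_ltn. Qed.

Lemma pending_weight0 b f0 f1 : pending_weight 0 b f0 f1 = 0%N.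
Proof.
rewrite /pending_weight big1 // => l _.
by rewrite /pending (eq_count_strings (Q := pred0)) ?count_strings_pred0 ?muln0.
Qed.

Lemma pending_weight_hi k b f0 f1 : Fmid B F b = f1 ->
  pending_weight k.+1 b f0 f1 = pending_weight k (rcons b false) f0 f1.
Proof.
move=> f21; apply: eq_bigr => l _; congr (_ * _)%N.
by apply: eq_count_strings => s _ /=; rewrite f21 eqxx.
Qed.

Lemma pending_weight_lo k b f0 f1 : Fmid B F b != f1 -> Fmid B F b = f0 ->
  pending_weight k.+1 b f0 f1 = pending_weight k (rcons b true) f0 f1.
Proof.
move=> f21 f20; apply: eq_bigr => l _; congr (_ * _)%N.
by apply: eq_count_strings => s _ /=; rewrite (negbTE f21) f20 eqxx.
Qed.

Section Split.
Variables (k : nat) (b : seq bool) (f0 f1 : rat).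
Let f2 := Fmid B F b.
Let a := bdigit (f2 - f0).
Let c := bdigit (f1 - f2).

Definition pending_after_loop (x : bool) (l : nat) (s : seq bool) : bool :=
  needs_more (if x then opt_run B F k (rcons b true) l f2 f1 s
              else opt_run B F k (rcons b false) l f0 f2 s).

Definition pending_loop (l : nat) : nat :=
  count_strings (loop_pred a c pending_after_loop l) (T - l).

Lemma pending_split l : f2 != f1 -> f2 != f0 ->
  pending k.+1 b l f0 f1 =
    if (0 < l)%N && a l && ~~ c l then pending k (rcons b false) l f0 f2
    else if (0 < l)%N && ~~ a l && c l then pending k (rcons b true) l f2 f1
    else pending_loop l.
Proof.
move=> f21 f20.
have run_split s : needs_more (opt_run B F k.+1 b l f0 f1 s) =
    if (0 < l)%N && a l && ~~ c l then needs_more (opt_run B F k (rcons b false) l f0 f2 s)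
    else if (0 < l)%N && ~~ a l && c l then needs_more (opt_run B F k (rcons b true) l f2 f1 s)
    else loop_pred a c pending_after_loop l s.
  rewrite /= -/f2 (negbTE f21) (negbTE f20) -/a -/c.
  do 2 case: ifP => // _; rewrite /loop_pred /pending_after_loop.
  by case: opt_loop => [[[[] l'] s']|].
rewrite /pending /pending_loop (eq_count_strings (fun s _ => run_split s)).
by case: ifP => // _; case: ifP.
Qed.

Lemma pending_weight_split_le : f0 < f2 -> f2 < f1 -> f1 - f0 <= 1 ->
  (pending_weight k.+1 b f0 f1 <= pending_weight k (rcons b false) f0 f2 +
     pending_weight k (rcons b true) f2 f1 + carry (f2 - f0) (f1 - f2) T)%N.
Proof.
move=> f02 f21 f01; have f1E : f1 - f0 = (f2 - f0) + (f1 - f2) by ring.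
have f2_neq1 : f2 != f1 by rewrite lt_eqF.
have f2_neq0 : f2 != f0 by rewrite gt_eqF.
have carry_rec j : (carry (f2 - f0) (f1 - f2) j.+1 + a j.+1 + c j.+1 =
    2 * carry (f2 - f0) (f1 - f2) j + bdigit (f1 - f0) j.+1)%N.
  by rewrite f1E; apply: carryS; rewrite subr_ge0 ltW.
have loop_rec l : (l < T)%N -> pending_loop l =
    ((if a l.+1 then pending k (rcons b false) l.+1 f0 f2 else pending_loop l.+1) +
     (if c l.+1 then pending k (rcons b true) l.+1 f2 f1 else pending_loop l.+1))%N.
  rewrite /pending_loop => lT; have -> : (T - l = (T - l.+1).+1)%N by lia.
  exact: count_loop_predS.
have loop_T : pending_loop T = 1%N by rewrite /pending_loop subnn count_strings0.
have pendingE j : (0 < j <= T)%N -> pending k.+1 b j f0 f1 =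
    if a j && ~~ c j then pending k (rcons b false) j f0 f2
    else if ~~ a j && c j then pending k (rcons b true) j f2 f1 else pending_loop j.
  by move=> /andP[j0 _]; rewrite pending_split ?j0.
have := loop_weight_le carry_rec loop_rec loop_T pendingE (leq0n T).
rewrite pending_weightE f1E -carry0 -?f1E ?subr_gt0 // (pending_split 0) //=.
move=> /leq_trans; apply; rewrite big_split /= leq_add2r.
by rewrite !pending_weightE leq_add ?leq_addl.
Qed.
End Split.
End Pending.

Section Potential.
Variables (n : nat) (B : BinFormat n) (F : n.-tuple bool -> rat) (T : nat).
Variables (Q : rat -> Prop) (H : rat -> rat).
Hypothesis H_frac : forall x y, Q x -> Q y -> x <= y ->
  frac ((y - x) * 2 ^+ T) <= H y - H x.
Hypothesis Q_Fmid : forall b, Q (Fmid B F b).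
Hypothesis F_mono : forall c c' : n.-tuple bool,
  lex_lt c c' -> F (bf_phi B c) <= F (bf_phi B c').

Lemma pending_weight_le_potential k b f0 f1 :
  (size b + k)%N = n -> Q f0 -> Q f1 -> f0 <= f1 -> f1 - f0 <= 1 ->
  (forall d, (size d < k)%N -> f0 <= Fmid B F (b ++ d) <= f1) ->
  (pending_weight B F T k b f0 f1)%:R + frac ((f1 - f0) * 2 ^+ T) <= H f1 - H f0.
Proof.
elim: k b f0 f1 => [|k IH] b f0 f1 bn Q0 Q1 f01 f01_le1 inside.
  by rewrite pending_weight0 add0r; apply: H_frac.
set f2 := Fmid B F b.
have /andP[f02 f21] : f0 <= f2 <= f1 by have := inside [::] isT; rewrite cats0.
have bn' x : (size (rcons b x) + k)%N = n by rewrite size_rcons -bn addSnnS.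
have insideL d : (size d < k)%N -> f0 <= Fmid B F (rcons b false ++ d) <= f2.
  move=> dk; rewrite cat_rcons; have /andP[-> _] := inside (false :: d) dk.
  by rewrite Fmid_catF // -bn; lia.
have insideR d : (size d < k)%N -> f2 <= Fmid B F (rcons b true ++ d) <= f1.
  move=> dk; rewrite cat_rcons; have /andP[_ ->] := inside (true :: d) dk.
  by rewrite Fmid_catT // -bn; lia.
have IHL := IH (rcons b false) f0 f2 (bn' false) Q0 (Q_Fmid b) f02 ltac:(lra) insideL.
have IHR := IH (rcons b true) f2 f1 (bn' true) (Q_Fmid b) Q1 f21 ltac:(lra) insideR.
have [f2_eq1 | f2_neq1] := eqVneq f2 f1.
  by rewrite pending_weight_hi // -f2_eq1.
have [f2_eq0 | f2_neq0] := eqVneq f2 f0.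
  by rewrite pending_weight_lo // -f2_eq0.
have := @pending_weight_split_le _ B F T k b f0 f1.
rewrite -/f2 !lt_def f2_neq0 f02 eq_sym f2_neq1 f21 => /(_ isT isT f01_le1).
rewrite -(ler_nat rat) !natrD carry_frac.
have -> : f2 - f0 + (f1 - f2) = f1 - f0 by ring.
lra.
Qed.
End Potential.

(* Every float of the format is a multiple of [2 ^- ulp_exp E m], the spacing
   of the subnormals. *)
Definition ulp_exp (E m : nat) : nat := m + (2 ^ E.-1 - 2).

Lemma is_float_dyadic E m x : (1 < E)%N -> is_float E m x ->
  exists N q p : nat, [/\ (N < 2 ^ m.+1)%N, (p <= ulp_exp E m)%N &
    x = N%:R * 2 ^+ q / 2 ^+ p].
Proof.
move=> E1 [e [M [_ Mm ->]]]; rewrite /float_val /ulp_exp.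
have E2 : (2 <= 2 ^ E.-1)%N by rewrite -{1}(expn1 2) leq_exp2l; lia.
case: eqP => [_ | e0].
  exists M, 0%N, (m + (2 ^ E.-1 - 2))%N; split=> //.
    by rewrite (leq_trans Mm) // leq_exp2l.
  have -> : 1 - fbias E = - (2 ^ E.-1 - 2)%N%:Z by rewrite /fbias; lia.
  by rewrite -exprnN expr0 mulr1 exprD invfM mulrA.
have [q [p [pK ->]]] : exists q p : nat,
    (p <= 2 ^ E.-1 - 2)%N /\ (2 : rat) ^ (e%:Z - fbias E) = 2 ^+ q / 2 ^+ p.
  have : - (2 ^ E.-1 - 2)%N%:Z <= e%:Z - fbias E by rewrite /fbias; lia.
  case: (e%:Z - fbias E) => [q | k] zK; first by exists q, 0%N; rewrite divr1.
  by exists 0%N, k.+1; rewrite expr0 mul1r; split=> //; move: zK; rewrite NegzE; lia.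
exists (2 ^ m + M)%N, q, (m + p)%N; split.
- by rewrite expnS mul2n -addnn ltn_add2l.
- by rewrite leq_add2l.
by rewrite natrD natrX exprD invfM; field; rewrite !expf_neq0.
Qed.

Lemma dyadic_int (N a p : nat) :
  (p <= a)%N -> (N%:R * 2 ^+ a / 2 ^+ p : rat) \is a Num.int.
Proof.
move=> pa; rewrite -(subnK pa) exprD mulrA mulfK ?expf_neq0 //.
by rewrite -natrX -natrM natr_int.
Qed.

Section Floats.
Variables (E m : nat).
Hypothesis E1 : (1 < E)%N.

Let scaleE N q p T :
  N%:R * 2 ^+ q / 2 ^+ p * 2 ^+ T = N%:R * 2 ^+ (q + T) / 2 ^+ p :> rat.
Proof. by rewrite exprD; field; rewrite expf_neq0. Qed.

Lemma is_float_scaled_int T x : is_float E m x -> (ulp_exp E m <= T)%N ->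
  x * 2 ^+ T \is a Num.int.
Proof.
case/(is_float_dyadic E1) => [N [q [p [_ pK ->]]]] KT.
by rewrite scaleE dyadic_int //; lia.
Qed.

Lemma is_float_scaled_int_ge T x : is_float E m x -> 2 ^+ m <= x * 2 ^+ T ->
  x * 2 ^+ T \is a Num.int.
Proof.
case/(is_float_dyadic E1) => [N [q [p [Nm _ ->]]]]; rewrite scaleE.
have [pa _ | ap] := leqP p (q + T); first exact: dyadic_int.
rewrite ler_pdivlMr ?exprn_gt0 // -!natrX -!natrM ler_nat -expnD.
have : (N * 2 ^ (q + T) < 2 ^ (m.+1 + (q + T)))%N.
  by rewrite (expnD 2 m.+1) ltn_pmul2r ?expn_gt0.
have : (2 ^ (m.+1 + (q + T)) <= 2 ^ (m + p))%N by rewrite leq_exp2l //; lia.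
lia.
Qed.
End Floats.

Section Potentials.
Variables (E m T : nat).
Hypothesis E1 : (1 < E)%N.

Lemma frac_float_diff_eq0 x y : is_float E m x -> is_float E m y ->
  (ulp_exp E m <= T)%N -> frac ((y - x) * 2 ^+ T) = 0.
Proof.
move=> fx fy KT; apply: frac_int; rewrite mulrBl.
by apply: rpredB; apply: is_float_scaled_int KT.
Qed.

Definition capped_scale (z : rat) : rat := Num.min (z * 2 ^+ T) (2 ^+ m).

Lemma frac_le_capped_scale x y : is_float E m x -> is_float E m y -> x <= y ->
  frac ((y - x) * 2 ^+ T) <= capped_scale y - capped_scale x.
Proof.
move=> fx fy xy; rewrite /capped_scale mulrBl.
have xy_scaled : x * 2 ^+ T <= y * 2 ^+ T by rewrite ler_pM2r ?exprn_gt0.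
case: (leP (y * 2 ^+ T) (2 ^+ m)) => [y_le | y_gt].
  by rewrite min_l ?(le_trans xy_scaled) // frac_le // subr_ge0.
have y_int := is_float_scaled_int_ge E1 fy (ltW y_gt).
have pow_int : (2 ^+ m : rat) \is a Num.int by rewrite -natrX natr_int.
case: (leP (x * 2 ^+ T) (2 ^+ m)) => [x_le | x_gt].
  have -> : y * 2 ^+ T - x * 2 ^+ T =
    (2 ^+ m - x * 2 ^+ T) + (y * 2 ^+ T - 2 ^+ m) by ring.
  by rewrite fracDz ?rpredB // frac_le // subr_ge0.
by rewrite frac_int ?subrr // rpredB // (is_float_scaled_int_ge E1 fx (ltW x_gt)).
Qed.
End Potentials.

Lemma tail_probE n (B : BinFormat n) F T :
  tail_prob B F T = (pending B F T n [::] 0 0 1)%:R / 2 ^+ T.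
Proof.
by rewrite /tail_prob (card_count_strings T (fun s => needs_more (Opt B F s))) /pending subn0.
Qed.

Lemma tail_prob_ge0 n (B : BinFormat n) F T : 0 <= tail_prob B F T.
Proof. by rewrite tail_probE divr_ge0 // exprn_ge0. Qed.

Section Tail.
Variables (E m n : nat) (B : BinFormat n) (F : n.-tuple bool -> rat).
Hypothesis E1 : (1 < E)%N.
Hypothesis F_cdf : is_fp_cdf E m B F.

Lemma pending_root_le T (H : rat -> rat) :
  (forall x y, is_float E m x -> is_float E m y -> x <= y ->
     frac ((y - x) * 2 ^+ T) <= H y - H x) ->
  (pending B F T n [::] 0 0 1)%:R <= H 1 - H 0.
Proof.
case: F_cdf => F_F01 F_top F_mono H_frac.
have F_mono' (c c' : n.-tuple bool) : lex_lt c c' -> F (bf_phi B c) <= F (bf_phi B c').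
  by move=> cc'; apply: F_mono; exists c, c'.
have float0 : is_float E m 0.
  exists 0%N, 0%N; rewrite /float_val eqxx !mul0r expn_gt0; split=> //.
  by rewrite subn_gt0 -{1}(expn0 2) ltn_exp2l //; lia.
have float1 : is_float E m 1 by rewrite -F_top; exact: (F_F01 _).1.
have := @pending_weight_le_potential n B F T (is_float E m) H H_frac
  (fun b => (F_F01 _).1) F_mono' n [::] 0 1 (add0n n) float0 float1 ler01 ltac:(lra)
  (fun d _ => (F_F01 _).2).
apply: le_trans; rewrite -[X in X <= _]addr0 lerD ?frac_ge0 // ler_nat.
have digit1 : bdigit (1 - 0) 0 by rewrite subr0 /bdigit expr0 mulr1 floor1.
by rewrite pending_weightE digit1 mul1n leq_addr.
Qed.

Lemma tail_prob_le_min T : tail_prob B F T <= Num.min 1 (2 ^+ m / 2 ^+ T).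
Proof.
rewrite le_min tail_probE; apply/andP; split.
  rewrite ler_pdivrMr ?exprn_gt0 // mul1r -natrX ler_nat.
  by rewrite /pending subn0 count_strings_le.
rewrite ler_pM2r ?invr_gt0 ?exprn_gt0 //.
apply: le_trans (pending_root_le (frac_le_capped_scale T E1)) _.
by rewrite /capped_scale mul0r mul1r (min_l (exprn_ge0 _ _)) // subr0 ge_min lexx orbT.
Qed.

Lemma tail_prob_eq0 T : (ulp_exp E m <= T)%N -> tail_prob B F T = 0.
Proof.
move=> KT; have frac0 x y : is_float E m x -> is_float E m y -> x <= y ->
    frac ((y - x) * 2 ^+ T) <= 0 - 0.
  by move=> fx fy _; rewrite (frac_float_diff_eq0 E1 fx fy KT) subrr.
have := pending_root_le (H := fun=> 0) frac0.
by rewrite subrr lern0 tail_probE => /eqP ->; rewrite mul0r.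
Qed.
End Tail.

Lemma sum_le_of_vanishing (f g : nat -> rat) M N :
  (forall k, 0 <= f k) -> (forall k, (k < M)%N -> f k <= g k) ->
  (forall k, (M <= k)%N -> f k = 0) ->
  \sum_(k < N) f k <= \sum_(k < M) g k.
Proof.
move=> f_ge0 fg f_vanish; rewrite -!(big_mkord xpredT).
apply: (@le_trans _ _ (\sum_(0 <= k < maxn N M) f k)).
  by rewrite (big_cat_nat (leq0n N) (leq_maxl N M)) /= lerDl sumr_ge0.
rewrite (big_cat_nat (leq0n M) (leq_maxr N M)) /= [X in _ + X]big1_seq ?addr0.
  by apply: ler_sum_nat => k /andP[_ kM]; apply: fg.
by move=> k /andP[_]; rewrite mem_index_iota => /andP[/f_vanish].
Qed.

Lemma sum_min1_pow2 m K :
  \sum_(k < m + K) Num.min 1 (2 ^+ m / 2 ^+ k) = (m + 2)%:R - 2 ^ (1 - K%:Z) :> rat.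
Proof.
rewrite big_split_ord /=.
have low (k : 'I_m) : Num.min 1 (2 ^+ m / 2 ^+ lshift K k) = 1 :> rat.
  apply: min_l; rewrite ler_pdivlMr ?exprn_gt0 // mul1r ler_eXn2l ?ltr1n //.
  exact: ltnW (ltn_ord k).
have high (i : 'I_K) : Num.min 1 (2 ^+ m / 2 ^+ rshift m i) = (2 ^-1) ^+ i :> rat.
  rewrite /= exprD invfM mulrA mulfV ?expf_neq0 // mul1r exprVn.
  by apply: min_r; rewrite invf_le1 ?exprn_gt0 // exprn_ege1.
rewrite (eq_bigr _ (fun k _ => low k)) (eq_bigr _ (fun i _ => high i)) sumr_const card_ord.
rewrite exprzDr ?unitfE // expr1z -exprnN -exprVn natrD.
have := subrX1 (2 ^-1 : rat) K; move: (\sum_(i < K) _) ((2 ^-1) ^+ K) => S X.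
lra.
Qed.

Unset Implicit Arguments.

Theorem theorem5p18 (E m n : nat) (B : BinFormat n) (F : n.-tuple bool -> rat) :
  (1 < E)%N ->
  is_fp_cdf E m B F ->
  expected_bits_le B F ((m + 2)%:R - (2 : rat) ^ (3 - (2 ^ E.-1)%:Z)).
Proof.
move=> E1 F_cdf N.
have -> : 3 - (2 ^ E.-1)%:Z = 1 - (2 ^ E.-1 - 2)%N%:Z.
  have : (2 <= 2 ^ E.-1)%N by rewrite -{1}(expn1 2) leq_exp2l; lia.
  lia.
rewrite -sum_min1_pow2.
apply: (sum_le_of_vanishing (f := tail_prob B F)
  (g := fun k => Num.min 1 (2 ^+ m / 2 ^+ k))) => k.
- exact: tail_prob_ge0.
- by move=> _; apply: tail_prob_le_min E1 F_cdf k.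
- by move=> kK; exact: (tail_prob_eq0 E1 F_cdf kK).
Qed.
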